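(* Fix integers $1\le n<N$, probabilities $p_0,p_1\in(0,1)$, a nonempty collection $\mathcal V$ of subsets of $\{1,\dots,N\}$ each of cardinality $n$, integers $0\le m'_\alpha\le m_\alpha$, and a threshold $b\in\mathbb R$. Let $G^{(1)},G^{(2)},\ldots$ be random undirected graphs on the vertex set $\{1,\dots,N\}$, with adjacency matrices $G^{(t)}\in\{0,1\}^{N\times N}$. For a subset $V\in\mathcal V$ and integers $k\le t$ set \[ R_{t,k,V}=\sum_{\substack{i,j\in V\\ i<j}}\sum_{m=k}^{t}\Big[G^{(m)}_{ij}\log\frac{p_1}{p_0}+(1-G^{(m)}_{ij})\log\frac{1-p_1}{1-p_0}\Big], \] and define the stopping time \[ T_{\mathrm G}=\inf\Big\{t:\ \max_{t-m_\alpha\le k\le t-m'_\alpha}\ \max_{V\in\mathcal V} R_{t,k,V}>b\Big\}. \] Let $\mathbb P_\infty$ denote the probability measure under which $G^{(1)},G^{(2)},\ldots$ are i.i.d. Erdős–Rényi graphs $\mathrm{ER}(N,p_0)$, i.e. all entries $G^{(t)}_{ij}$, $i<j$, $t\ge1$, are independent Bernoulli$(p_0)$. Then \[ \sup_{\tau\ge 1}\mathbb P_\infty\big(\tau\le T_{\mathrm G}<\tau+m_\alpha\big)\le 2m_\alpha e^{-b}\binom{N}{n}. \]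
   Context: $\mathrm{ER}(N,p)$ denotes the Erdős–Rényi random graph on $N$ labeled vertices in which each of the $\binom N2$ possible edges is present independently with probability $p$; $G^{(t)}_{ij}=G^{(t)}_{ji}=1$ iff vertices $i$ and $j$ are joined at time $t$. The collection $\mathcal V$ is the set of candidate subgraphs (vertex subsets of size $n$) where a change might occur; $|\mathcal V|\le\binom Nn$. *)

From HB Require Import structures.
From mathcomp Require Import all_boot all_order all_algebra.
From mathcomp Require Import all_classical all_reals all_analysis.
Set Implicit Arguments. Unset Strict Implicit. Unset Printing Implicit Defensive.
Import Order.TTheory GRing.Theory Num.Theory.
Local Open Scope classical_set_scope.
Local Open Scope ring_scope.

Definition mutually_independent d (T : measurableType d) (R : realType)
  (P : probability T R) (I : eqType) (D : set I) (E : I -> set T) : Prop :=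
  forall s : seq I, uniq s -> (forall i, i \in s -> D i) ->
    P (\bigcap_(i in [set i | i \in s]) E i) = (\prod_(i <- s) P (E i))%E.

Definition Rstat (T : Type) (R : realType) (N : nat) (p0 p1 : R)
  (G : nat -> 'I_N -> 'I_N -> T -> bool) (t k : nat) (V : {set 'I_N}) (x : T) : R :=
  \sum_(i in V) \sum_(j in V | (i < j)%N) \sum_(k <= mm < t.+1)
     ((G mm i j x)%:R * ln (p1 / p0) + (1 - (G mm i j x)%:R) * ln ((1 - p1) / (1 - p0))).

(* The detection condition at time t:
   max_{t-m <= k <= t-m', k >= 1} max_{V in Vs} R_{t,k,V} > b
   (max over an empty range is -oo, i.e. no alarm). *)
Definition alarm (T : Type) (R : realType) (N : nat) (p0 p1 : R)
  (Vs : {set {set 'I_N}}) (m m' : nat) (b : R)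
  (G : nat -> 'I_N -> 'I_N -> T -> bool) (t : nat) (x : T) : Prop :=
  exists k : nat, [/\ (1 <= k)%N, (t <= k + m)%N, (k + m' <= t)%N &
    exists2 V, V \in Vs & b < Rstat p0 p1 G t k V x].

(* The stopping time T_G = inf { t : alarm at t } (inf of the empty set = +oo),
   as an extended real. *)
Definition TG (T : Type) (R : realType) (N : nat) (p0 p1 : R)
  (Vs : {set {set 'I_N}}) (m m' : nat) (b : R)
  (G : nat -> 'I_N -> 'I_N -> T -> bool) (x : T) : \bar R :=
  ereal_inf [set (t%:R)%:E | t in [set t : nat | alarm p0 p1 Vs m m' b G t x]].

From HB Require Import structures.
From mathcomp Require Import all_boot all_order all_algebra.
From mathcomp Require Import all_classical all_reals all_analysis.
From mathcomp Require Import ring zify.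
Import Order.TTheory GRing.Theory Num.Theory.
Local Open Scope classical_set_scope.
Local Open Scope ring_scope.

(** Under the null hypothesis each statistic [t |-> R_{t,k,V}], for a fixed
start [k] and subgraph [V], is the logarithm of a mean-one product martingale
of likelihood ratios, so by Ville's maximal inequality it ever exceeds [b]
with probability at most [e^-b].  If [tau <= T_G < tau + m], the alarm is
raised by some [V] and some start [k] in a window of [2 m] values around
[tau]; a union bound over these [k] and over the at most [binom N n]
subgraphs gives the claim.  Ville's inequality is proved by a finite
optional-stopping induction that conditions on the outcomes of the
Bernoulli variables one at a time. *)

Lemma perm_cat_cons {A : eqType} (s t : seq A) (a : A) :
  perm_eq (s ++ a :: t) (a :: s ++ t).
Proof. by rewrite (perm_catCA s [:: a] t). Qed.

Lemma le_measure_bigsetU {d} {T : measurableType d} {R : realType}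
    (mu : {measure set T -> \bar R}) {I : Type} (r : seq I) {Q : pred I}
    {F : I -> set T} :
  (forall i, Q i -> measurable (F i)) ->
  (mu (\big[setU/set0]_(i <- r | Q i) F i) <= \sum_(i <- r | Q i) mu (F i))%E.
Proof.
move=> mF; elim: r => [|i r IH]; first by rewrite !big_nil measure0.
rewrite !big_cons; case: ifP => // Qi.
apply: le_trans (measureU2 _ (mF i Qi) (bigsetU_measurable _ mF)) _.
by rewrite leeD2l.
Qed.

Section independent_bernoulli.
Context {d} {T : measurableType d} {R : realType} {P : probability T R}.
Context {I : eqType} {D : set I} {X : I -> T -> bool} {p : I -> R}.
Hypothesis mX : forall i, measurable [set x | X i x].
Hypothesis PX : forall i, D i -> P [set x | X i x] = (p i)%:E.
Hypothesis indepX : mutually_independent P D (fun i => [set x | X i x]).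

Definition bern_mass (q : R) (β : bool) : R := if β then q else 1 - q.

Definition cylinder (s : seq (I * bool)) : set T :=
  [set x | forall ib, ib \in s -> X ib.1 x = ib.2].

Lemma cylinder_nil : cylinder [::] = setT.
Proof. by apply/seteqP; split => x // _ ib; rewrite in_nil. Qed.

Lemma cylinder_cons i β s :
  cylinder ((i, β) :: s) = [set x | X i x = β] `&` cylinder s.
Proof.
apply/seteqP; split => x /=.
  move=> H; split => [|ib ibs]; first by apply: (H (i, β)); rewrite mem_head.
  by apply: H; rewrite inE ibs orbT.
by move=> [Hi Hs] ib; rewrite inE => /orP[/eqP -> //|]; apply: Hs.
Qed.

Lemma setC_Xtrue i : ~` [set x | X i x] = [set x | X i x = false].
Proof. by apply/seteqP; split => x /=; [move/negP/negbTE | move=> ->]. Qed.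

Lemma measurable_Xeq i β : measurable [set x | X i x = β].
Proof. by case: β; [exact: mX | rewrite -setC_Xtrue; exact: measurableC]. Qed.

Lemma measurable_cylinder s : measurable (cylinder s).
Proof.
elim: s => [|[i β] s IH]; first by rewrite cylinder_nil.
by rewrite cylinder_cons; exact: measurableI (measurable_Xeq _ _) IH.
Qed.

Lemma cylinder_true_prob t : uniq t -> {in t, forall i, D i} ->
  P (cylinder [seq (j, true) | j <- t]) = (\prod_(j <- t) p j)%:E.
Proof.
move=> ut Dt.
have -> : cylinder [seq (j, true) | j <- t] =
    \bigcap_(j in [set j | j \in t]) [set x | X j x].
  apply/seteqP; split => x /=.
    by move=> H j jt; apply: (H (j, true)); rewrite map_f.
  by move=> H _ /mapP[j jt ->]; apply: H.
rewrite indepX // -prodEFin; apply: eq_big_seq => j jt; exact: PX (Dt j jt).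
Qed.

(* Induction on the specified coordinates: a coordinate required to be
   [false] is removed by inclusion-exclusion, one required to be [true] is
   moved to the all-[true] tail handled by independence. *)
Lemma cylinder_prob_true_tail s t :
  uniq (map fst s ++ t) -> {in map fst s ++ t, forall i, D i} ->
  P (cylinder s `&` cylinder [seq (j, true) | j <- t]) =
  (\prod_(ib <- s) bern_mass (p ib.1) ib.2 * \prod_(j <- t) p j)%:E.
Proof.
elim: s t => [|[i β] s IH] t ust Dst.
  by rewrite cylinder_nil setTI cylinder_true_prob // big_nil mul1r.
have ust' : uniq (map fst s ++ i :: t) by rewrite (perm_uniq (perm_cat_cons _ _ _)).
have Dst' : {in map fst s ++ i :: t, forall j, D j}.
  by move=> j; rewrite (perm_mem (perm_cat_cons _ _ _)); exact: Dst.
have ust0 : uniq (map fst s ++ t) by case/andP: ust.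
have Dst0 : {in map fst s ++ t, forall j, D j}.
  by move=> j jst; apply: Dst; rewrite inE jst orbT.
set C := cylinder [seq (j, true) | j <- t].
have cyl_it : cylinder s `&` cylinder [seq (j, true) | j <- i :: t] =
    [set x | X i x] `&` (cylinder s `&` C) by rewrite /= cylinder_cons setICA.
rewrite cylinder_cons big_cons -setIA; case: β {ust Dst} => /=.
  by rewrite -cyl_it IH // big_cons mulrCA mulrA.
have fin : (P (cylinder s `&` C) < +oo)%E by rewrite IH ?ltry.
have mC : measurable (cylinder s `&` C).
  by apply: measurableI; exact: measurable_cylinder.
have PD : P ((cylinder s `&` C) `\` [set x | X i x]) =
    (P (cylinder s `&` C) - P (cylinder s `&` C `&` [set x | X i x]))%E.
  exact: measureD.
rewrite -(setC_Xtrue i) setIC -setDE PD [_ `&` [set x | X i x]]setIC -cyl_it.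
by rewrite !IH // big_cons -EFinB; congr (_%:E); ring.
Qed.

Lemma cylinder_prob s : uniq (map fst s) -> {in map fst s, forall i, D i} ->
  P (cylinder s) = (\prod_(ib <- s) bern_mass (p ib.1) ib.2)%:E.
Proof.
move=> us Ds; have := @cylinder_prob_true_tail s [::].
by rewrite cylinder_nil setIT big_nil mulr1 cats0; apply.
Qed.

Lemma prod_bern_mass_ge0 s : uniq (map fst s) -> {in map fst s, forall i, D i} ->
  0 <= \prod_(ib <- s) bern_mass (p ib.1) ib.2.
Proof. by move=> us Ds; rewrite -lee_fin -cylinder_prob. Qed.

Context {lam : I -> bool -> R} {b : R}.

(* A program [l] drives a walk started at [y]: the instruction [Some i] adds
   the increment [lam i (X i x)], and [None] is a checkpoint.  [crosses l y x]
   says that the walk is above [b] at some checkpoint. *)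
Fixpoint crosses (l : seq (option I)) (y : R) (x : T) : bool :=
  match l with
  | [::] => false
  | None :: l => (b < y) || crosses l y x
  | Some i :: l => crosses l (y + lam i (X i x)) x
  end.

Lemma crosses_cat l r y x :
  crosses (map Some l ++ r) y x = crosses r (y + \sum_(i <- l) lam i (X i x)) x.
Proof.
elim: l y => [|i l IH] y /=; first by rewrite big_nil addr0.
by rewrite IH big_cons addrA.
Qed.

Lemma measurable_crosses l y : measurable [set x | crosses l y x].
Proof.
elim: l y => [|[i|] l IH] y /=.
- by rewrite (_ : [set x | false] = set0) //; apply/seteqP; split.
- rewrite (_ : [set x | _] =
    ([set x | X i x = true] `&` [set x | crosses l (y + lam i true) x]) `|`
    ([set x | X i x = false] `&` [set x | crosses l (y + lam i false) x])).
    by apply: measurableU; apply: measurableI => //; exact: measurable_Xeq.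
  by apply/seteqP; split => x /=; [case: (X i x) => H; [left | right] | case=> -[->]].
- case: (b < y) => //=.
  by rewrite (_ : [set x | true] = setT) //; apply/seteqP; split.
Qed.

Hypothesis lam_mean1 : forall i, D i ->
  p i * expR (lam i true) + (1 - p i) * expR (lam i false) = 1.

Lemma bern_mass_expR_mean1 i c y : D i ->
  bern_mass (p i) true * c * expR (y + lam i true - b) +
  bern_mass (p i) false * c * expR (y + lam i false - b) = c * expR (y - b).
Proof.
move=> Di; have expR_step β : expR (y + lam i β - b) = expR (y - b) * expR (lam i β).
  by rewrite -expRD addrAC.
by rewrite !expR_step -[RHS]mulr1 -(lam_mean1 i Di) /bern_mass; ring.
Qed.

(* A finite form of Ville's inequality: [e^(y - b)] is a martingale along the
   walk by [lam_mean1], and it is at least [1] once the walk is above [b]. *)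
Theorem cylinder_crosses_prob_le l s y :
  uniq (map fst s ++ pmap id l) -> {in map fst s ++ pmap id l, forall i, D i} ->
  (P (cylinder s `&` [set x | crosses l y x]) <=
    (\prod_(ib <- s) bern_mass (p ib.1) ib.2 * expR (y - b))%:E)%E.
Proof.
elim: l s y => [|[i|] l IH] s y /= us Ds.
- have us0 : uniq (map fst s) by rewrite cats0 in us.
  have Ds0 : {in map fst s, forall i, D i} by move=> i; rewrite -[map _ _]cats0; exact: Ds.
  rewrite (_ : [set x | false] = set0); last by apply/seteqP; split.
  by rewrite setI0 measure0 lee_fin mulr_ge0 ?expR_ge0 ?prod_bern_mass_ge0.
- have us' : uniq (i :: map fst s ++ pmap id l).
    by rewrite -(perm_uniq (perm_cat_cons _ _ _)).
  have Ds' : {in i :: map fst s ++ pmap id l, forall j, D j}.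
    by move=> j; rewrite -(perm_mem (perm_cat_cons _ _ _)); exact: Ds.
  have Di : D i by apply: Ds'; rewrite mem_head.
  pose A β := cylinder ((i, β) :: s) `&` [set x | crosses l (y + lam i β) x].
  have mA β : measurable (A β).
    by apply: measurableI; [exact: measurable_cylinder | exact: measurable_crosses].
  have -> : cylinder s `&` [set x | crosses l (y + lam i (X i x)) x] = A true `|` A false.
    apply/seteqP; split => x /=; rewrite /A !cylinder_cons.
      move=> [cs cr]; case E: (X i x) cr => cr;
        by [left | right]; exact: (conj (conj E cs) cr).
    by case=> -[[/= -> cs] cr].
  have PU : (P (A true `|` A false) <= P (A true) + P (A false))%E.
    exact: measureU2.
  apply: le_trans PU _.
  apply: le_trans (leeD (IH ((i, true) :: s) _ us' Ds') (IH ((i, false) :: s) _ us' Ds')) _.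
  by rewrite -EFinD lee_fin !big_cons bern_mass_expR_mean1.
- have [hy|_] := ltrP b y; last exact: IH.
  have us0 : uniq (map fst s) by move: us; rewrite cat_uniq => /andP[].
  have Ds0 : {in map fst s, forall i, D i}.
    by move=> i si; apply: Ds; rewrite mem_cat si.
  rewrite (_ : [set x | true] = setT); last by apply/seteqP; split.
  rewrite setIT cylinder_prob // lee_fin ler_peMr ?prod_bern_mass_ge0 //.
  by rewrite -expR0 ler_expR subr_ge0 ltW.
Qed.

Corollary crosses_prob_le l : uniq (pmap id l) -> {in pmap id l, forall i, D i} ->
  (P [set x | crosses l 0 x] <= (expR (- b))%:E)%E.
Proof.
move=> ul Dl; have := @cylinder_crosses_prob_le l [::] 0 ul Dl.
by rewrite cylinder_nil setTI big_nil mul1r sub0r.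
Qed.

End independent_bernoulli.

Arguments crosses {d T R I} X lam b l y x.

Section cusum_graph.
Context {d} {T : measurableType d} {R : realType} {P : probability T R}.
Context {N : nat} {p0 p1 b : R} {G : nat -> 'I_N -> 'I_N -> T -> bool}.
Hypotheses (p0_gt0 : 0 < p0) (p0_lt1 : p0 < 1) (p1_gt0 : 0 < p1) (p1_lt1 : p1 < 1).
Hypothesis mG : forall t i j, measurable [set x | G t i j x].
Hypothesis PG : forall t (i j : 'I_N), (1 <= t)%N -> (i < j)%N ->
  P [set x | G t i j x] = p0%:E.
Hypothesis indepG : mutually_independent P
  [set tij : nat * 'I_N * 'I_N | (1 <= tij.1.1)%N && (tij.1.2 < tij.2)%N]
  (fun tij => [set x | G tij.1.1 tij.1.2 tij.2 x]).

Local Notation edge := (nat * 'I_N * 'I_N)%type.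

Definition edge_var (e : edge) : T -> bool := G e.1.1 e.1.2 e.2.

Definition llr (β : bool) : R :=
  β%:R * ln (p1 / p0) + (1 - β%:R) * ln ((1 - p1) / (1 - p0)).

Lemma llr_mean1 : p0 * expR (llr true) + (1 - p0) * expR (llr false) = 1.
Proof.
have q0 : 0 < 1 - p0 by rewrite subr_gt0.
have q1 : 0 < 1 - p1 by rewrite subr_gt0.
rewrite /llr /= mul1r mul0r subrr mul0r addr0 add0r subr0 mul1r.
rewrite !lnK ?posrE ?divr_gt0 // [p0 * _]mulrC [(1 - p0) * _]mulrC.
by rewrite !divfK ?gt_eqF // addrC subrK.
Qed.

Local Notation crosses := (crosses edge_var (fun=> llr) b).

Definition edges (V : {set 'I_N}) (u : nat) : seq edge :=
  [seq (u, ij.1, ij.2) |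
     ij <- enum [set ij : 'I_N * 'I_N | [&& ij.1 \in V, ij.2 \in V & (ij.1 < ij.2)%N]]%SET].

Lemma Rstat_edges t k V x :
  Rstat p0 p1 G t k V x = \sum_(k <= u < t.+1) \sum_(e <- edges V u) llr (edge_var e x).
Proof.
rewrite /Rstat pair_big_dep /= exchange_big /=; apply: eq_bigr => u _.
by rewrite /edges big_map big_enum /=; apply: eq_bigl => ij; rewrite inE.
Qed.

(* [scan V k c] evaluates [R_{t,k,V}] at a checkpoint for each
   [t = k, ..., k + c - 1]. *)
Fixpoint scan (V : {set 'I_N}) (k c : nat) : seq (option edge) :=
  if c is c'.+1 then map Some (edges V k) ++ None :: scan V k.+1 c' else [::].

Lemma crosses_scan V c k y x t : (k <= t < k + c)%N ->
  b < y + Rstat p0 p1 G t k V x -> crosses (scan V k c) y x.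
Proof.
elim: c k y => [|c IH] k y kt; first lia.
rewrite Rstat_edges /= crosses_cat /= => Hb.
have [tk|tk] := eqVneq t k; first by move: Hb; rewrite tk big_nat1 => ->.
have kt' : (k < t)%N by rewrite ltn_neqAle eq_sym tk; case/andP: kt.
apply/orP; right; apply: (IH k.+1); first lia.
by rewrite Rstat_edges -addrA -big_ltn // ltnS ltnW.
Qed.

Lemma scan_edges V k c : uniq (pmap id (scan V k c)) /\
  {in pmap id (scan V k c), forall e : edge, (k <= e.1.1)%N && (e.1.2 < e.2)%N}.
Proof.
elim: c k => [|c IH] k //=; rewrite pmap_cat map_pK //=; have [u a] := IH k.+1.
have edgesP e : e \in edges V k -> e.1.1 = k /\ (e.1.2 < e.2)%N.
  by case/mapP => ij; rewrite mem_enum inE => /and3P[_ _ ?] ->.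
split.
  rewrite cat_uniq u andbT; apply/andP; split.
    by rewrite map_inj_uniq ?enum_uniq // => -[? ?] [? ?] [-> ->].
  apply/hasPn => e /a /andP[ke _]; apply/negP => /edgesP[ek _].
  by move: ke; rewrite ek ltnn.
move=> e; rewrite mem_cat => /orP[/edgesP[-> ->] | /a /andP[ke ->]].
  by rewrite leqnn.
by rewrite andbT ltnW.
Qed.

Lemma measurable_edge_var e : measurable [set x | edge_var e x].
Proof. exact: mG. Qed.

Lemma measurable_Rstat_gt t k V : measurable [set x | b < Rstat p0 p1 G t k V x].
Proof.
pose l := flatten [seq edges V u | u <- index_iota k t.+1].
rewrite (_ : [set x | _] = [set x | crosses (map Some l ++ [:: None]) 0 x]).
  exact: (measurable_crosses measurable_edge_var).
apply/funext => x /=.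
by rewrite crosses_cat /= add0r orbF Rstat_edges /l big_flatten /= big_map.
Qed.

Lemma scan_prob_le V k c : (1 <= k)%N ->
  (P [set x | crosses (scan V k c) 0 x] <= (expR (- b))%:E)%E.
Proof.
move=> k1; have [u a] := scan_edges V k c.
apply: (crosses_prob_le measurable_edge_var _ indepG) => //.
- by move=> e /andP[? ?]; exact: PG.
- by move=> e _; exact: llr_mean1.
- by move=> e /a /andP[ke lt]; rewrite /= lt andbT (leq_trans k1).
Qed.

Section stopping_time.
Variables (Vs : {set {set 'I_N}}) (m m' : nat).

Local Notation TG := (TG p0 p1 Vs m m' b G).
Local Notation alarm := (alarm p0 p1 Vs m m' b G).

Lemma measurable_alarm t : measurable [set x | alarm t x].
Proof.
rewrite (_ : [set x | _] = \bigcup_(k in [set k | [&& 1 <= k, t <= k + m & k + m' <= t]%N])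
    \bigcup_(V in [set V | V \in Vs]) [set x | b < Rstat p0 p1 G t k V x]).
  apply: bigcup_measurable => k _; apply: fin_bigcup_measurable => // V _.
  exact: measurable_Rstat_gt.
apply/seteqP; split => x /=.
  by move=> [k [k1 k2 k3 [V VV HV]]]; exists k; [rewrite /= k1 k2 k3 | exists V].
by move=> [k /and3P[k1 k2 k3] [V VV HV]]; exists k; split => //; exists V.
Qed.

Definition alarm_before (n : nat) : set T := \bigcup_(t in `I_n) [set x | alarm t x].

Lemma measurable_alarm_before n : measurable (alarm_before n).
Proof. by apply: bigcup_measurable => t _; exact: measurable_alarm. Qed.

Lemma TG_lt n x : (TG x < n%:R%:E)%E <-> alarm_before n x.
Proof.
split; first by case/ereal_inf_lt => _ [t At <-]; rewrite lte_fin ltr_nat; exists t.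
case=> t tn At; apply: le_lt_trans (ereal_inf_lbound _) _; first by exists t.
by rewrite lte_fin ltr_nat.
Qed.

Lemma TG_window τ :
  [set x | (τ%:R%:E <= TG x)%E /\ (TG x < (τ + m)%:R%:E)%E] =
  alarm_before (τ + m) `\` alarm_before τ.
Proof.
apply/seteqP; split => x /=.
  by move=> [τT /TG_lt Tτ]; split => // /TG_lt; rewrite ltNge τT.
by move=> [/TG_lt Tτ nτ]; split => //; rewrite leNgt; apply/negP => /TG_lt.
Qed.

Definition window_start τ r := maxn 1 (τ - m + r).

Definition window_crossing τ r V : set T :=
  [set x | crosses (scan V (window_start τ r) (τ + m - window_start τ r)) 0 x].

Lemma window_cover τ : alarm_before (τ + m) `\` alarm_before τ `<=`
  \big[setU/set0]_(r < 2 * m) \big[setU/set0]_(V in Vs) window_crossing τ r V.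
Proof.
move=> x [[t /= tτ [k [k1 k2 k3 [V VV HV]]]] nτ].
have τt : (τ <= t)%N.
  rewrite leqNgt; apply/negP => tτ'; apply: nτ; exists t => //.
  by exists k; split => //; exists V.
rewrite -(bigcup_mkord _ (fun r => \big[setU/set0]_(V in Vs) window_crossing τ r V)).
exists (k - (τ - m))%N; first by rewrite /=; lia.
rewrite -bigcup_seq_cond; exists V; first by rewrite /= mem_index_enum.
rewrite /window_crossing /window_start (_ : maxn _ _ = k); last by lia.
by apply: (crosses_scan _ _ _ _ _ t); [lia | rewrite add0r].
Qed.

Lemma window_prob_le τ :
  (P [set x | (τ%:R%:E <= TG x)%E /\ (TG x < (τ + m)%:R%:E)%E] <=
    ((2 * m * #|Vs|)%:R * expR (- b))%:E)%E.
Proof.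
rewrite TG_window.
have mW r V : measurable (window_crossing τ r V).
  exact: (measurable_crosses measurable_edge_var).
apply: le_trans (le_measure _ _ _ (window_cover τ)) _.
- by rewrite inE; apply: measurableD; exact: measurable_alarm_before.
- by rewrite inE; do 2!apply: bigsetU_measurable => ? _.
have PU : (P (\big[setU/set0]_(r < 2 * m) \big[setU/set0]_(V in Vs) window_crossing τ r V)
    <= \sum_(r < 2 * m) \sum_(V in Vs) P (window_crossing τ r V))%E.
  apply: le_trans (le_measure_bigsetU P _ _) _ => [r _|].
    exact: bigsetU_measurable.
  by apply: lee_sum => r _; exact: le_measure_bigsetU.
apply: le_trans PU _.
have PW r V : (P (window_crossing τ r V) <= (expR (- b))%:E)%E.
  by apply: scan_prob_le; rewrite leq_maxl.
apply: (@le_trans _ _ (\sum_(r < 2 * m) \sum_(V in Vs) (expR (- b))%:E)%E).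
  by apply: lee_sum => r _; apply: lee_sum => V _; exact: PW.
by rewrite sumEFin sumEFin lee_fin !sumr_const card_ord -mulrnA mulr_natl mulnC.
Qed.

End stopping_time.

End cusum_graph.

Theorem lemma1 (d : measure_display) (T : measurableType d) (R : realType)
  (P : probability T R) (N n : nat) (p0 p1 : R)
  (Vs : {set {set 'I_N}}) (m m' : nat) (b : R)
  (G : nat -> 'I_N -> 'I_N -> T -> bool) :
  (1 <= n)%N -> (n < N)%N ->
  0 < p0 < 1 -> 0 < p1 < 1 ->
  (0 < #|Vs|)%N -> (forall V, V \in Vs -> #|V| = n) ->
  (m' <= m)%N ->
  (* undirected graphs: symmetric adjacency matrices *)
  (forall t i j x, G t i j x = G t j i x) ->
  (* P_infty: all entries G^{(t)}_{ij}, i<j, t>=1, are independent Bernoulli(p0) *)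
  (forall t i j, measurable [set x | G t i j x]) ->
  (forall t (i j : 'I_N), (1 <= t)%N -> (i < j)%N -> P [set x | G t i j x] = p0%:E) ->
  mutually_independent P
    [set tij : nat * 'I_N * 'I_N | (1 <= tij.1.1)%N && (tij.1.2 < tij.2)%N]
    (fun tij => [set x | G tij.1.1 tij.1.2 tij.2 x]) ->
  (ereal_sup [set P [set x | (tau%:R%:E <= TG p0 p1 Vs m m' b G x)%E /\
                            (TG p0 p1 Vs m m' b G x < (tau + m)%:R%:E)%E]
            | tau in [set tau : nat | (1 <= tau)%N]]
    <= (2 * m%:R * expR (- b) * 'C(N, n)%:R)%:E)%E.
Proof.
move=> _ _ /andP[p0_gt0 p0_lt1] /andP[p1_gt0 p1_lt1] _ VsC _ _ mG PG indepG.
apply: ge_ereal_sup => _ [τ _ <-].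
apply: le_trans (window_prob_le p0_gt0 p0_lt1 p1_gt0 p1_lt1 mG PG indepG Vs m m' τ) _.
have card_Vs : (#|Vs| <= 'C(N, n))%N.
  rewrite -[X in 'C(X, _)]card_ord -card_draws.
  by apply: fintype.subset_leq_card; apply/fintype.subsetP => V VV; rewrite inE VsC.
rewrite lee_fin; apply: (@le_trans _ _ ((2 * m * 'C(N, n))%:R * expR (- b))).
  by rewrite ler_wpM2r ?expR_ge0 // ler_nat leq_mul2l card_Vs orbT.
by rewrite !natrM mulrAC.
Qed.
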